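(* Suppose Assumptions A1 and A3 hold. Then for every $i\in\mathcal{A}$ and $t\in\mathbb{N}$, $$\|\mathbf{q}_i(t)\|^2\le 2L^2\big(1+\mu^2K\|\mathbf{e}_i(t)-\bar{\mathbf{e}}(t)\|^2\big).$$
   Context: Let $\mathcal{A}$ be a finite set of $N$ agents. Agent $i$ has a decision variable $\mathbf{y}_i$ in a Euclidean space, a local objective $\phi_i$, a vector function $\mathbf{g}_i=(g_{i1},\dots,g_{iK})$ with values in $\mathbb{R}^K$, a nonempty closed convex set $\mathcal{G}_{i0}$, and a finite index set $\tilde{\mathcal{K}}_i$ of local constraint functions $c_{ik}$. Put $\tilde{\mathcal{G}}_i=\{\mathbf{y}_i: c_{ik}(\mathbf{y}_i)\le 0\ \forall k\in\tilde{\mathcal{K}}_i\}$, $\mathcal{G}_i=\mathcal{G}_{i0}\cap\tilde{\mathcal{G}}_i$, $\mathcal{G}=\prod_{i}\mathcal{G}_i$, $\mathbf{g}(\mathbf{y})=\sum_i\mathbf{g}_i(\mathbf{y}_i)$, $\mathcal{K}_G=\{1,\dots,K\}$, $x^+=\max(0,x)$. For a fixed $\mu>0$, $\Phi(\mathbf{y})=\sum_i\phi_i(\mathbf{y}_i)+\frac{\mu}{2N}\sum_{k\in\mathcal{K}_G}g_k^+(\mathbf{y})^2$. Norms are Euclidean, $P_S$ is projection, $\mathsf{d}_S(\mathbf{x})=\|\mathbf{x}-P_S(\mathbf{x})\|$, $\partial f(\mathbf{x})$ a subgradient. Algorithm: each agent picks $\mathbf{y}_i(0)\in\mathcal{G}_{i0}$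 and sets $\mathbf{e}_i(0)=\mathbf{g}_i(\mathbf{y}_i(0))$; for $t\in\mathbb{N}$: $\mathbf{z}_i(t)=P_{\mathcal{G}_{i0}}\big(\mathbf{y}_i(t)-\gamma_t(\mathbf{q}_i(t)+\mathbf{V}_i(t))\big)$, $\mathbf{y}_i(t+1)=P_{\mathcal{G}_{i0}}\big(\mathbf{z}_i(t)-\beta_{it}\sum_{k\in\mathcal{K}_{it}}\frac{c^+_{ik}(\mathbf{z}_i(t))}{\|\mathbf{d}_{ik}\|^2}\mathbf{d}_{ik}\big)$, $\mathbf{e}_i(t+1)=\sum_{j\in\mathcal{A}}w_{ij}(t)\mathbf{e}_j(t)+\mathbf{g}_i(\mathbf{y}_i(t+1))-\mathbf{g}_i(\mathbf{y}_i(t))$, where $\mathbf{q}_i(t)=\partial\phi_i(\mathbf{y}_i(t))+\mu\sum_{k\in\mathcal{K}_G}\partial g_{ik}(\mathbf{y}_i(t))\,e^+_{ik}(t)$ ($e_{ik}$ the $k$-th entry of $\mathbf{e}_i$); $\gamma_t>0$; $\mathbf{V}_i(t)$ arbitrary vectors; $\mathcal{K}_{it}\subset\tilde{\mathcal{K}}_i$ of size $s_i\ge1$; $\beta_{it}\in(0,2/s_i)$; $\mathbf{d}_{ik}$ a subgradient of $c_{ik}$ at $\mathbf{z}_i(t)$ if $c_{ik}(\mathbf{z}_i(t))>0$ and a fixed nonzero vector otherwise; $W(t)=[w_{ij}(t)]$ weight matrices. $\bar{\mathbf{e}}(t)=\frac1N\sum_i\mathbf{e}_i(t)$. A1: (a)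 each $\mathcal{G}_i$ nonempty convex, $\mathcal{G}_{i0}$ closed convex; (b) $\phi_i$, $g_{ik}$ convex and $L$-Lipschitz on $\mathcal{G}_{i0}$, and $\Phi$ $L$-Lipschitz on $\prod_i\mathcal{G}_{i0}$; (c) $c_{ik}$ convex and $L$-Lipschitz on $\mathcal{G}_{i0}$, and there is $C>0$ with $\mathsf{d}^2_{\mathcal{G}_i}(\mathbf{z})\le C\,\mathbb{E}_{\mathcal{K}}[\sum_{k\in\mathcal{K}}c^+_{ik}(\mathbf{z})^2]$ for all $\mathbf{z}\in\mathcal{G}_{i0}$, $\mathcal{K}$ uniform over size-$s_i$ subsets of $\tilde{\mathcal{K}}_i$; (d) $\Phi$ has a minimizer over $\mathcal{G}$. A3: with $\mathcal{E}_t=\{(i,j):w_{ij}(t)>0\}$, there is $Q\in\mathbb{N}$ such that for all $k\ge0$ the graph $(\mathcal{A},\bigcup_{l=1}^Q\mathcal{E}_{k+l})$ is strongly connected; each $W(t)$ is doubly stochastic; there is $w_{\min}>0$ with every nonzero $w_{ij}(t)\in[w_{\min},1]$.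
   Formalization: L-Lipschitz continuity of φᵢ, gᵢₖ, cᵢₖ on 𝒢ᵢ₀ and of Φ on ∏ᵢ𝒢ᵢ₀ also includes the condition that every subgradient at a point of that set has norm at most L. The statement above fails without it. *)

From mathcomp Require Import all_boot all_order all_algebra.
From mathcomp Require Import all_classical all_reals all_analysis.
Import numFieldNormedType.Exports.
Set Implicit Arguments. Unset Strict Implicit. Unset Printing Implicit Defensive.
Import Order.TTheory GRing.Theory Num.Theory.
Local Open Scope ring_scope.
Local Open Scope classical_set_scope.

Section Defs.
Context {R : realType}.

Definition dotv (m : nat) (u v : 'rV[R]_m) : R := \sum_(j < m) u 0 j * v 0 j.
Definition nrm2 (m : nat) (u : 'rV[R]_m) : R := dotv u u.
Definition nrm (m : nat) (u : 'rV[R]_m) : R := Num.sqrt (nrm2 u).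

Definition pos (x : R) : R := Num.max 0 x.

Definition is_subgrad (m : nat) (f : 'rV[R]_m -> R) (x d : 'rV[R]_m) : Prop :=
  forall z, f x + dotv d (z - x) <= f z.

Definition cvx_set (m : nat) (S : set 'rV[R]_m) : Prop :=
  forall x y (a : R), S x -> S y -> 0 <= a <= 1 -> S (a *: x + (1 - a) *: y).

Definition cvx_on (m : nat) (S : set 'rV[R]_m) (f : 'rV[R]_m -> R) : Prop :=
  forall x y (a : R), S x -> S y -> 0 <= a <= 1 ->
    f (a *: x + (1 - a) *: y) <= a * f x + (1 - a) * f y.

(* "f is L-Lipschitz on S", read (as the paper uses it) for convex functions:
   the Lipschitz inequality on S, and every subgradient of f at a point of S
   has norm at most L. *)
Definition lip_on (m : nat) (L : R) (S : set 'rV[R]_m) (f : 'rV[R]_m -> R) :=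
  (forall x y, S x -> S y -> `|f x - f y| <= L * nrm (x - y)) /\
  (forall x d, S x -> is_subgrad f x d -> nrm d <= L).

Definition is_proj (m : nat) (S : set 'rV[R]_m) (x p : 'rV[R]_m) : Prop :=
  S p /\ forall w, S w -> nrm2 (x - p) <= nrm2 (x - w).

(* d_S(x)^2 <= b  (d_S(x) = inf_{w in S} ||x - w||) *)
Definition dist2_le (m : nat) (S : set 'rV[R]_m) (x : 'rV[R]_m) (b : R) : Prop :=
  forall eps : R, 0 < eps -> exists w, S w /\ nrm2 (x - w) <= b + eps.

Definition pvec (N : nat) (n : 'I_N -> nat) := forall i : 'I_N, 'rV[R]_(n i).
Context {N : nat} {n : 'I_N -> nat}.
Local Notation pv := (pvec n).
Definition pdot (u v : pv) : R := \sum_i dotv (u i) (v i).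
Definition pnrm (u : pv) : R := Num.sqrt (pdot u u).
Definition psub (u v : pv) : pv := fun i => u i - v i.

Definition is_psubgrad (F : pv -> R) (x d : pv) : Prop :=
  forall z, F x + pdot d (psub z x) <= F z.

Definition plip_on (L : R) (S : pv -> Prop) (F : pv -> R) :=
  (forall x y, S x -> S y -> `|F x - F y| <= L * pnrm (psub x y)) /\
  (forall x d, S x -> is_psubgrad F x d -> pnrm d <= L).

Context {K : nat}.
Definition gsum (g : forall i : 'I_N, 'I_K -> 'rV[R]_(n i) -> R) (y : pv) (k : 'I_K) : R :=
  \sum_i g i k (y i).
Definition Phi (mu : R) (phi : forall i : 'I_N, 'rV[R]_(n i) -> R)
  (g : forall i : 'I_N, 'I_K -> 'rV[R]_(n i) -> R) (y : pv) : R :=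
  \sum_i phi i (y i) + mu / (2 * N%:R) * \sum_(k < K) (pos (gsum g y k)) ^+ 2.

Definition gvec (g : forall i : 'I_N, 'I_K -> 'rV[R]_(n i) -> R) (i : 'I_N)
  (x : 'rV[R]_(n i)) : 'rV[R]_K := \row_k g i k x.

Definition ebar (e : 'I_N -> 'rV[R]_K) : 'rV[R]_K := N%:R^-1 *: \sum_i e i.

Definition qvec (mu : R) (dphi : forall i : 'I_N, 'rV[R]_(n i) -> 'rV[R]_(n i))
  (dg : forall i : 'I_N, 'I_K -> 'rV[R]_(n i) -> 'rV[R]_(n i))
  (i : 'I_N) (y : 'rV[R]_(n i)) (e : 'rV[R]_K) : 'rV[R]_(n i) :=
  dphi i y + mu *: \sum_(k < K) pos (e 0 k) *: dg i k y.

Definition union_graph_strongly_connected (W : nat -> 'M[R]_N) (Q k : nat) : Prop :=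
  forall i j : 'I_N,
    connect (fun a b : 'I_N => [exists l : 'I_Q, 0 < W (k + l.+1)%N a b]) i j.

Definition doubly_stochastic (M : 'M[R]_N) : Prop :=
  (forall i j, 0 <= M i j) /\
  (forall i, \sum_j M i j = 1) /\ (forall j, \sum_i M i j = 1).

End Defs.

From mathcomp Require Import all_boot all_order all_algebra.
From mathcomp Require Import all_classical all_reals all_analysis.
From mathcomp Require Import ring lra.
Import numFieldNormedType.Exports.
Import Order.TTheory GRing.Theory Num.Theory.
Local Open Scope ring_scope.
Local Open Scope classical_set_scope.

(* Since the weights are column stochastic, the update of e preserves the sum
   of the e_i, which therefore tracks g(y) = sum_i g_i(y_i): ebar(t) = g(y(t))/N.
   Consequently q_i(t) with e_i(t) replaced by ebar(t) is the i-th block of a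
   subgradient of Phi at y(t), whose norm is at most L. The true q_i(t) differs
   from it only through the coefficients e_ik^+ versus ebar_k^+, and x |-> x^+
   is 1-Lipschitz, so the error is at most mu sqrt(K) L ||e_i(t) - ebar(t)||;
   (a + b)^2 <= 2a^2 + 2b^2 concludes. *)

Section PositivePart.
Context {R : realType}.
Implicit Types a b c x : R.

Lemma pos_id {x} : 0 <= x -> pos x = x.
Proof. by move=> x_ge0; rewrite /pos max_r. Qed.

Lemma pos_nonpos {x} : x <= 0 -> pos x = 0.
Proof. by move=> x_le0; rewrite /pos max_l. Qed.

Lemma pos_ge0 x : 0 <= pos x.
Proof. by rewrite /pos le_max lexx. Qed.

Lemma posMl c x : 0 <= c -> pos (c * x) = c * pos x.
Proof. by move=> c_ge0; rewrite /pos maxr_pMr // mulr0. Qed.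

Lemma pos_sqr_subgrad a b : pos b ^+ 2 + 2 * pos b * (a - b) <= pos a ^+ 2.
Proof.
case: (lerP b 0) => [b_le0|b_gt0]; first by rewrite pos_nonpos //; have := pos_ge0 a; nra.
rewrite (pos_id (ltW b_gt0)); case: (lerP a 0) => [a_le0|a_gt0].
  by rewrite pos_nonpos //; nra.
by rewrite (pos_id (ltW a_gt0)); have := sqr_ge0 (a - b); nra.
Qed.

Lemma sqr_pos_sub_le a b : (pos a - pos b) ^+ 2 <= (a - b) ^+ 2.
Proof.
have := sqr_ge0 (a - b); have := sqr_ge0 a; have := sqr_ge0 b.
case: (lerP b 0) => [b_le0|b_gt0]; [rewrite (pos_nonpos b_le0) | rewrite (pos_id (ltW b_gt0))];
  case: (lerP a 0) => [a_le0|a_gt0];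
  [rewrite (pos_nonpos a_le0) | rewrite (pos_id (ltW a_gt0)) | rewrite (pos_nonpos a_le0) |
   rewrite (pos_id (ltW a_gt0))]; nra.
Qed.

End PositivePart.

Section EuclideanNorm.
Context {R : realType}.

Lemma sqr_sum_le {K : nat} (x : 'I_K -> R) : (\sum_k x k) ^+ 2 <= K%:R * \sum_k x k ^+ 2.
Proof.
rewrite expr2 mulr_suml.
apply: (@le_trans _ _ (\sum_k \sum_l (x k ^+ 2 / 2 + x l ^+ 2 / 2))).
  apply: ler_sum => k _; rewrite mulr_sumr; apply: ler_sum => l _.
  by have := sqr_ge0 (x k - x l); nra.
under eq_bigr => k _ do rewrite big_split /=.
rewrite big_split /= exchange_big /= !sumr_const card_ord -!mulr_suml.
by rewrite -mulrnDl -splitr mulr_natl.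
Qed.

Lemma le_sqr_of_sqrt_le {a L : R} : 0 <= a -> Num.sqrt a <= L -> a <= L ^+ 2.
Proof.
move=> a_ge0 aL; rewrite -[a]sqr_sqrtr //.
by rewrite lerXn2r ?nnegrE ?sqrtr_ge0 // (le_trans (sqrtr_ge0 _) aL).
Qed.

Context {m : nat}.
Implicit Types u v w : 'rV[R]_m.

Lemma nrm2E u : nrm2 u = \sum_j u 0 j ^+ 2.
Proof. by apply: eq_bigr => j _; rewrite expr2. Qed.

Lemma nrm2_ge0 u : 0 <= nrm2 u.
Proof. by rewrite nrm2E; apply: sumr_ge0 => j _; apply: sqr_ge0. Qed.

Lemma nrm2_le_sqr u (L : R) : nrm u <= L -> nrm2 u <= L ^+ 2.
Proof. exact/le_sqr_of_sqrt_le/nrm2_ge0. Qed.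

Lemma dotvDl u v w : dotv (u + v) w = dotv u w + dotv v w.
Proof. by rewrite /dotv -big_split; apply: eq_bigr => j _; rewrite mxE mulrDl. Qed.

Lemma dotvZl (c : R) u w : dotv (c *: u) w = c * dotv u w.
Proof. by rewrite /dotv mulr_sumr; apply: eq_bigr => j _; rewrite mxE mulrA. Qed.

Lemma dotv_suml {K : nat} (f : 'I_K -> 'rV[R]_m) w :
  dotv (\sum_k f k) w = \sum_k dotv (f k) w.
Proof. by rewrite /dotv exchange_big; apply: eq_bigr => j _; rewrite summxE mulr_suml. Qed.

Lemma nrm2Z (c : R) u : nrm2 (c *: u) = c ^+ 2 * nrm2 u.
Proof. by rewrite !nrm2E mulr_sumr; apply: eq_bigr => j _; rewrite mxE exprMn. Qed.

Lemma nrm2D_le u v : nrm2 (u + v) <= 2 * nrm2 u + 2 * nrm2 v.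
Proof.
rewrite !nrm2E !mulr_sumr -big_split /=; apply: ler_sum => j _; rewrite mxE.
by have := sqr_ge0 (u 0 j - v 0 j); nra.
Qed.

Lemma nrm2_sum_le {K : nat} (u : 'I_K -> 'rV[R]_m) :
  nrm2 (\sum_k u k) <= K%:R * \sum_k nrm2 (u k).
Proof.
rewrite nrm2E (eq_bigr (fun j => (\sum_k u k 0 j) ^+ 2)); last by move=> j _; rewrite summxE.
apply: le_trans (ler_sum _ (fun j _ => sqr_sum_le (fun k => u k 0 j))) _.
by rewrite -mulr_sumr exchange_big; under [X in _ <= _ * X]eq_bigr do rewrite nrm2E.
Qed.

End EuclideanNorm.

Lemma nrm2_block_le {R : realType} {N : nat} {n : 'I_N -> nat} (u : pvec (R:=R) n) i (L : R) :
  pnrm u <= L -> nrm2 (u i) <= L ^+ 2.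
Proof.
have pdot_ge0 : 0 <= pdot u u by apply: sumr_ge0 => j _; apply: nrm2_ge0.
move=> /(le_sqr_of_sqrt_le pdot_ge0); apply: le_trans.
by rewrite /pdot (bigD1 i) //= lerDl; apply: sumr_ge0 => j _; apply: nrm2_ge0.
Qed.

Lemma column_stochastic_tracking {R : realType} {N : nat} {V : lmodType R}
    {W : nat -> 'M[R]_N} {e h : nat -> 'I_N -> V} :
  (forall t j, \sum_i W t i j = 1) -> (forall i, e 0%N i = h 0%N i) ->
  (forall t i, e t.+1 i = \sum_j W t i j *: e t j + h t.+1 i - h t i) ->
  forall t, \sum_i e t i = \sum_i h t i.
Proof.
move=> W_col e0 e_step; elim=> [|t IHt]; first by apply: eq_bigr => i _.
under eq_bigr do rewrite e_step.
rewrite !big_split /= sumrN exchange_big /=.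
under eq_bigr => j _ do rewrite -scaler_suml W_col scale1r.
by rewrite IHt addrAC subrr add0r.
Qed.

Section PenaltySubgradient.
Context {R : realType} {N : nat} {n : 'I_N -> nat} {K : nat}.
Variables (mu : R) (phi : forall i : 'I_N, 'rV[R]_(n i) -> R)
  (g : forall i : 'I_N, 'I_K -> 'rV[R]_(n i) -> R)
  (dphi : forall i : 'I_N, 'rV[R]_(n i) -> 'rV[R]_(n i))
  (dg : forall i : 'I_N, 'I_K -> 'rV[R]_(n i) -> 'rV[R]_(n i)).

Lemma sum_gvec (y : pvec n) : \sum_i gvec g (y i) = \row_k gsum g y k.
Proof. by apply/rowP => k; rewrite summxE !mxE; apply: eq_bigr => i _; rewrite mxE. Qed.

Lemma Phi_psubgrad (y : pvec n) :
  (0 < N)%N -> 0 <= mu ->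
  (forall i, is_subgrad (phi i) (y i) (dphi i (y i))) ->
  (forall i k, is_subgrad (g i k) (y i) (dg i k (y i))) ->
  is_psubgrad (Phi mu phi g) y
    (fun i => qvec mu dphi dg (y i) (N%:R^-1 *: \row_k gsum g y k)).
Proof.
move=> N_gt0 mu_ge0 dphiP dgP x.
have invN_ge0 : 0 <= N%:R^-1 :> R by rewrite invr_ge0 ler0n.
pose dgsum k := \sum_i dotv (dg i k (y i)) (x i - y i).
have pdotE : pdot (fun i => qvec mu dphi dg (y i) (N%:R^-1 *: \row_k gsum g y k))
    (psub x y) = \sum_i dotv (dphi i (y i)) (x i - y i)
                 + mu / (2 * N%:R) * \sum_k 2 * pos (gsum g y k) * dgsum k.
  rewrite /pdot /psub; under eq_bigr do rewrite dotvDl dotvZl dotv_suml.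
  rewrite big_split /=; congr (_ + _).
  rewrite -mulr_sumr exchange_big -mulrA; congr (mu * _); rewrite mulr_sumr.
  apply: eq_bigr => k _.
  have -> : (2 * N%:R)^-1 * (2 * pos (gsum g y k) * dgsum k)
            = N%:R^-1 * pos (gsum g y k) * dgsum k.
    by field; rewrite pnatr_eq0 -lt0n.
  rewrite mxE mxE posMl // mulr_sumr; apply: eq_bigr => i _.
  by rewrite dotvZl.
have phi_step : \sum_i phi i (y i) + \sum_i dotv (dphi i (y i)) (x i - y i)
    <= \sum_i phi i (x i).
  by rewrite -big_split; apply: ler_sum => i _; apply: dphiP.
have penalty_step : \sum_k (pos (gsum g y k) ^+ 2 + 2 * pos (gsum g y k) * dgsum k)
    <= \sum_k pos (gsum g x k) ^+ 2.
  apply: ler_sum => k _; apply: le_trans (pos_sqr_subgrad (gsum g x k) (gsum g y k)).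
  have g_step : gsum g y k + dgsum k <= gsum g x k.
    by rewrite -big_split; apply: ler_sum => i _; apply: dgP.
  by rewrite lerD2l ler_wpM2l ?mulr_ge0 ?pos_ge0 // lerBrDl.
have weight_ge0 : 0 <= mu / (2 * N%:R) by rewrite mulr_ge0 // invr_ge0 mulr_ge0 // ler0n.
move: (ler_wpM2l weight_ge0 penalty_step); rewrite big_split mulrDr /Phi pdotE.
lra.
Qed.

Lemma nrm2_qvec_sub_le (L : R) i (x : 'rV[R]_(n i)) (e1 e2 : 'rV[R]_K) :
  (forall k, nrm2 (dg i k x) <= L ^+ 2) ->
  nrm2 (qvec mu dphi dg x e1 - qvec mu dphi dg x e2)
    <= mu ^+ 2 * K%:R * L ^+ 2 * nrm2 (e1 - e2).
Proof.
move=> dg_le.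
have -> : qvec mu dphi dg x e1 - qvec mu dphi dg x e2
          = mu *: \sum_k (pos (e1 0 k) - pos (e2 0 k)) *: dg i k x.
  rewrite /qvec opprD addrACA subrr add0r -scalerBr -sumrB.
  by under eq_bigr do rewrite -scalerBl.
rewrite nrm2Z -[_ * nrm2 (e1 - e2)]mulrA -mulrA; apply: (ler_wpM2l (sqr_ge0 mu)).
apply: le_trans (nrm2_sum_le _) _; rewrite ler_wpM2l ?ler0n //.
rewrite nrm2E mulr_sumr; apply: ler_sum => k _.
rewrite nrm2Z !mxE mulrC; apply: ler_pM; rewrite ?nrm2_ge0 ?sqr_ge0 //.
exact: sqr_pos_sub_le.
Qed.

End PenaltySubgradient.

Theorem lemma4
  (R : realType) (N : nat) (n : 'I_N -> nat) (K : nat)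
  (* problem data *)
  (phi : forall i : 'I_N, 'rV[R]_(n i) -> R)
  (g : forall i : 'I_N, 'I_K -> 'rV[R]_(n i) -> R)
  (G0 : forall i : 'I_N, set 'rV[R]_(n i))
  (m : 'I_N -> nat) (c : forall i : 'I_N, 'I_(m i) -> 'rV[R]_(n i) -> R)
  (mu L C : R) (s : 'I_N -> nat)
  (* subgradient oracles *)
  (dphi : forall i : 'I_N, 'rV[R]_(n i) -> 'rV[R]_(n i))
  (dg : forall i : 'I_N, 'I_K -> 'rV[R]_(n i) -> 'rV[R]_(n i))
  (dc : forall i : 'I_N, 'I_(m i) -> 'rV[R]_(n i) -> 'rV[R]_(n i))
  (dfix : forall i : 'I_N, 'I_(m i) -> 'rV[R]_(n i))
  (* algorithm parameters *)
  (gamma : nat -> R) (V : nat -> forall i : 'I_N, 'rV[R]_(n i))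
  (Ksel : nat -> forall i : 'I_N, {set 'I_(m i)}) (beta : nat -> 'I_N -> R)
  (W : nat -> 'M[R]_N) (Q : nat) (wmin : R)
  (* trajectories *)
  (y z : nat -> forall i : 'I_N, 'rV[R]_(n i)) (e : nat -> 'I_N -> 'rV[R]_K) :
  let Gi := fun i : 'I_N => fun x : 'rV[R]_(n i) =>
              G0 i x /\ forall k : 'I_(m i), c i k x <= 0 in
  let Gprod := fun x : pvec (R:=R) n => forall i, Gi i (x i) in
  let G0prod := fun x : pvec (R:=R) n => forall i, G0 i (x i) in
  (0 < N)%N -> 0 < mu ->
  (* ---- Assumption A1 ---- *)
  (* (a) *)
  (forall i, (exists x, Gi i x) /\ cvx_set (Gi i)) ->
  (forall i, closed (G0 i) /\ cvx_set (G0 i) /\ exists x, G0 i x) ->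
  (* (b) *)
  (forall i, cvx_on (G0 i) (phi i) /\ lip_on L (G0 i) (phi i)) ->
  (forall i k, cvx_on (G0 i) (g i k) /\ lip_on L (G0 i) (g i k)) ->
  plip_on L G0prod (Phi mu phi g) ->
  (* (c) *)
  (forall i k, cvx_on (G0 i) (c i k) /\ lip_on L (G0 i) (c i k)) ->
  0 < C ->
  (forall i, (1 <= s i <= m i)%N) ->
  (forall i x, G0 i x ->
     dist2_le (Gi i) x
       (C * ((\sum_(S : {set 'I_(m i)} | #|S| == s i)
                \sum_(k in S) pos (c i k x) ^+ 2)
             / #|[set S : {set 'I_(m i)} | #|S| == s i]|%:R))) ->
  (* (d) *)
  (exists ys, Gprod ys /\ forall x, Gprod x -> Phi mu phi g ys <= Phi mu phi g x) ->
  (* ---- Assumption A3 ---- *)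
  (forall k, union_graph_strongly_connected W Q k) ->
  (forall t, doubly_stochastic (W t)) ->
  0 < wmin ->
  (forall t i j, W t i j != 0 -> wmin <= W t i j <= 1) ->
  (* ---- subgradient oracles ---- *)
  (forall i x, G0 i x -> is_subgrad (phi i) x (dphi i x)) ->
  (forall i k x, G0 i x -> is_subgrad (g i k) x (dg i k x)) ->
  (forall i k x, G0 i x -> 0 < c i k x -> is_subgrad (c i k) x (dc i k x)) ->
  (forall i k, dfix i k != 0) ->
  (* ---- algorithm ---- *)
  (forall t, 0 < gamma t) ->
  (forall t i, #|Ksel t i| = s i) ->
  (forall t i, 0 < beta t i < 2 / (s i)%:R) ->
  (forall i, G0 i (y 0%N i)) ->
  (forall i, e 0%N i = gvec g (y 0%N i)) ->
  (forall t i, is_proj (G0 i) (y t i - gamma t *: (qvec mu dphi dg (y t i) (e t i) + V t i))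
                 (z t i)) ->
  (forall t i,
     let d := fun k : 'I_(m i) => if 0 < c i k (z t i) then dc i k (z t i) else dfix i k in
     is_proj (G0 i)
       (z t i - beta t i *: \sum_(k in Ksel t i) (pos (c i k (z t i)) / nrm2 (d k)) *: d k)
       (y t.+1 i)) ->
  (forall t i, e t.+1 i = \sum_j W t i j *: e t j + gvec g (y t.+1 i) - gvec g (y t i)) ->
  (* ---- conclusion ---- *)
  forall (i : 'I_N) (t : nat),
    nrm2 (qvec mu dphi dg (y t i) (e t i))
      <= 2 * L ^+ 2 * (1 + mu ^+ 2 * K%:R * nrm2 (e t i - ebar (e t))).
Proof.
move=> Gi Gprod G0prod N_gt0 mu_gt0 _ _ _ g_lip Phi_lip _ _ _ _ _ _ W_ds _ _
  dphi_subgrad dg_subgrad _ _ _ _ _ y0_G0 e0 _ y_proj e_step i t.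
have y_G0 j : G0 j (y t j) by case: t => [|t]; [exact: y0_G0 | have [] := y_proj t j].
have ebarE : ebar (e t) = N%:R^-1 *: \row_k gsum g (y t) k.
  rewrite /ebar -sum_gvec.
  by rewrite (column_stochastic_tracking (h := fun t j => gvec g (y t j))
    (fun t => (W_ds t).2.2) e0 e_step).
pose d j := qvec mu dphi dg (y t j) (ebar (e t)).
have d_subgrad : is_psubgrad (Phi mu phi g) (y t) d.
  rewrite /d ebarE; apply: Phi_psubgrad N_gt0 (ltW mu_gt0) _ _ => [j | j k].
  - exact: dphi_subgrad.
  - exact: dg_subgrad.
have d_le : nrm2 (d i) <= L ^+ 2.
  by apply: nrm2_block_le; apply: Phi_lip.2 d_subgrad => j; exact: y_G0.
have dg_le k : nrm2 (dg i k (y t i)) <= L ^+ 2.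
  by apply: nrm2_le_sqr; apply: (g_lip i k).2.2 (y_G0 i) _; exact: dg_subgrad.
have := nrm2_qvec_sub_le mu dphi dg _ _ _ (e t i) (ebar (e t)) dg_le.
have := nrm2D_le (d i) (qvec mu dphi dg (y t i) (e t i) - d i).
rewrite addrC subrK; lra.
Qed.
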